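(* Let $\gamma\in\mathcal{M}_k\otimes\mathcal{M}_k$ be a nonzero state whose image is contained in the anti-symmetric subspace of $\mathbb{C}^k\otimes\mathbb{C}^k$. Then $\gamma^\Gamma\not\ge0$, $\mathcal{R}(\gamma^\Gamma)\not\ge0$, and $\mathcal{R}(\gamma)\neq\gamma$.
   Context: $\mathcal{M}_k$ denotes complex $k\times k$ matrices; $\mathcal{M}_k\otimes\mathcal{M}_k\cong\mathcal{M}_{k^2}$ via the Kronecker product. A state is a positive semidefinite Hermitian matrix (not necessarily of trace one). The anti-symmetric subspace of $\mathbb{C}^k\otimes\mathbb{C}^k$ is $\{x:F_kx=-x\}$, where $F_k(v\otimes w)=w\otimes v$. Partial transpose: $(\sum_iA_i\otimes B_i)^\Gamma=\sum_iA_i\otimes B_i^t$. Realignment on $\mathcal{M}_k\otimes\mathcal{M}_k$: identify $\mathcal{M}_k$ with $\mathbb{C}^k\otimes\mathbb{C}^k$ via $\mathrm{vec}(vw^t)=v\otimes w$ (extended linearly), and set $\mathcal{R}(A\otimes B)=\mathrm{vec}(A)\mathrm{vec}(B)^t$, extended linearly. *)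

(* Complex matrices are modelled over an arbitrary
   numClosedFieldType C (e.g. algC or complex R for R : realType),
   which contains the case of the complex numbers. *)
From mathcomp Require Import all_boot all_order all_algebra.
From mathcomp Require Import mxtens.
Set Implicit Arguments. Unset Strict Implicit. Unset Printing Implicit Defensive.
Import Order.TTheory GRing.Theory Num.Theory.
Local Open Scope ring_scope.

(* Kronecker identification M_k (x) M_k = M_{k^2}: the basis vector
   e_i (x) e_j of C^k (x) C^k has index i*k + j (mxtens_index (i,j)). *)
Definition tidx (k : nat) (i j : 'I_k) : 'I_(k * k) := mxtens_index (i, j).

(* positive semidefinite Hermitian matrix ("state", and "X >= 0") *)
Definition psd (C : numClosedFieldType) (n : nat) (A : 'M[C]_n) : Prop :=
  (forall i j, A j i = (A i j)^*) /\
  (forall v : 'cV[C]_n, 0 <= ((map_mx Num.conj v)^T *m A *m v) 0 0).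

(* swap operator F_k (v (x) w) = w (x) v *)
Definition swap_mx (C : numClosedFieldType) (k : nat) : 'M[C]_(k * k) :=
  \matrix_(p, q)
    (((mxtens_unindex p).1 == (mxtens_unindex q).2) &&
     ((mxtens_unindex p).2 == (mxtens_unindex q).1))%:R.

(* partial transpose: (A (x) B)^Gamma = A (x) B^t, i.e.
   X^Gamma((i,j),(i',j')) = X((i,j'),(i',j)) *)
Definition ptrans (C : numClosedFieldType) (k : nat) (X : 'M[C]_(k * k))
  : 'M[C]_(k * k) :=
  \matrix_(p, q)
    X (tidx (mxtens_unindex p).1 (mxtens_unindex q).2)
      (tidx (mxtens_unindex q).1 (mxtens_unindex p).2).

(* realignment: vec(v w^t) = v (x) w, R(A (x) B) = vec(A) vec(B)^t, i.e.
   R(X)((a,b),(c,d)) = X((a,c),(b,d)) *)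
Definition realign (C : numClosedFieldType) (k : nat) (X : 'M[C]_(k * k))
  : 'M[C]_(k * k) :=
  \matrix_(p, q)
    X (tidx (mxtens_unindex p).1 (mxtens_unindex q).1)
      (tidx (mxtens_unindex p).2 (mxtens_unindex q).2).

From mathcomp Require Import all_boot all_order all_algebra.
From mathcomp Require Import mxtens ring.
Import Order.TTheory GRing.Theory Num.Theory.
Local Open Scope ring_scope.

(* Antisymmetry [F gamma = - gamma] and hermiticity make [gamma] odd under the
   swap [(a,b) <-> (b,a)] of either index, so [gamma(ab,ba) = - gamma(ab,ab)]
   and the rows and columns indexed by [(a,a)] vanish.  A nonzero positive
   semidefinite matrix has a positive diagonal entry [gamma(ab,ab)], and all
   three claims are then read off at the indices [ab], [aa], [bb]: the form of
   [gamma^Gamma] at [e_aa + e_bb] is [-2 gamma(ab,ab)], the diagonal entry of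
   [R(gamma^Gamma)] at [ab] is [- gamma(ab,ab)], and that of [R(gamma)] is
   [gamma(aa,bb) = 0]. *)

Section Indices.
Variable k : nat.

Lemma tidxK (i j : 'I_k) : mxtens_unindex (tidx i j) = (i, j).
Proof. exact: mxtens_indexK. Qed.

Lemma tidx_unindexK (p : 'I_(k * k)) :
  tidx (mxtens_unindex p).1 (mxtens_unindex p).2 = p.
Proof. by rewrite /tidx -surjective_pairing mxtens_unindexK. Qed.

Definition tswap (p : 'I_(k * k)) : 'I_(k * k) :=
  tidx (mxtens_unindex p).2 (mxtens_unindex p).1.

Lemma tswap_tidx (i j : 'I_k) : tswap (tidx i j) = tidx j i.
Proof. by rewrite /tswap tidxK. Qed.

Lemma mul_swap_mxE (C : numClosedFieldType) m (M : 'M[C]_(k * k, m)) p q :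
  (swap_mx C k *m M) p q = M (tswap p) q.
Proof.
rewrite !mxE (bigD1 (tswap p)) //= big1 ?addr0.
  by rewrite mxE /tswap tidxK !eqxx mul1r.
move=> r r_neq; rewrite mxE.
case: andP => [[/eqP e1 /eqP e2]|_]; last by rewrite mul0r.
by case/eqP: r_neq; rewrite /tswap e1 e2 tidx_unindexK.
Qed.

End Indices.

Arguments tswap {k} p.
Arguments tswap_tidx {k}.
Arguments tidx_unindexK {k}.

Section PositiveSemidefinite.
Variables (C : numClosedFieldType) (n : nat).
Implicit Type A : 'M[C]_n.

Lemma qform_delta2 A i j a b :
  let v := a *: delta_mx i 0 + b *: delta_mx j 0 : 'cV_n in
  ((map_mx Num.conj v)^T *m A *m v) 0 0 =
  a^* * a * A i i + a^* * b * A i j + b^* * a * A j i + b^* * b * A j j.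
Proof.
move=> v.
have -> : (map_mx Num.conj v)^T = a^* *: delta_mx 0 i + b^* *: delta_mx 0 j.
  apply/matrixP => x y; rewrite !mxE [x]ord1 eqxx !andbT.
  by rewrite rmorphD !rmorphM /= !rmorph_nat.
rewrite /v !mulmxDl !mulmxDr -!scalemxAl -!scalemxAr -!rowE -!colE !mxE.
ring.
Qed.

Lemma psd_qform2_ge0 A i j a b : psd A ->
  0 <= a^* * a * A i i + a^* * b * A i j + b^* * a * A j i + b^* * b * A j j.
Proof. by case=> _ A_ge0; rewrite -qform_delta2. Qed.

Lemma psd_diag_ge0 A i : psd A -> 0 <= A i i.
Proof.
move/(@psd_qform2_ge0 A i i 1 0).
by rewrite conjC1 conjC0 !mul1r !mul0r !addr0.
Qed.

(* Testing against [e_i - conj (A i j) e_j] gives [-2 |A i j|^2 >= 0]. *)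
Lemma psd_diag0_eq0 A : psd A -> (forall i, A i i = 0) -> A = 0.
Proof.
move=> A_psd diag0; apply/matrixP => i j; rewrite mxE.
have [A_herm _] := A_psd.
have := @psd_qform2_ge0 A i j 1 (- (A i j)^*) A_psd.
rewrite !diag0 (A_herm i j) raddfN /= conjCK conjC1.
have -> : 1 * 1 * 0 + 1 * - (A i j)^* * A i j + - A i j * 1 * (A i j)^*
          + - A i j * - (A i j)^* * 0 = - (`|A i j| ^+ 2 + `|A i j| ^+ 2).
  by rewrite normCK; ring.
rewrite oppr_ge0 => le0.
have /eqP : `|A i j| ^+ 2 + `|A i j| ^+ 2 = 0.
  by apply/le_anti; rewrite le0 addr_ge0 ?exprn_ge0.
by rewrite paddr_eq0 ?exprn_ge0 // andbb expf_eq0 /= normr_eq0 => /eqP.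
Qed.

Lemma psd_neq0_diag_gt0 A : psd A -> A != 0 -> exists i, 0 < A i i.
Proof.
move=> A_psd A_neq0.
have [i Aii_neq0|diag0] := pickP (fun i => A i i != 0).
  by exists i; rewrite lt_def Aii_neq0 psd_diag_ge0.
case/eqP: A_neq0; apply: psd_diag0_eq0 => // i.
by apply/eqP/negbFE/diag0.
Qed.

End PositiveSemidefinite.

Arguments psd_qform2_ge0 {C n A}.
Arguments psd_diag_ge0 {C n A}.
Arguments psd_neq0_diag_gt0 {C n A}.

Section AntisymmetricState.
Variables (C : numClosedFieldType) (k : nat) (gamma : 'M[C]_(k * k)).
Hypothesis gamma_psd : psd gamma.
Hypothesis gamma_anti :
  forall x : 'cV[C]_(k * k), swap_mx C k *m (gamma *m x) = - (gamma *m x).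

Lemma anti_row p q : gamma (tswap p) q = - gamma p q.
Proof.
have := congr1 (fun M : 'cV[C]_(k * k) => M p 0) (gamma_anti (delta_mx q 0)).
by rewrite /= mul_swap_mxE -colE !mxE.
Qed.

Lemma anti_col p q : gamma p (tswap q) = - gamma p q.
Proof.
have [gamma_herm _] := gamma_psd.
by rewrite gamma_herm anti_row raddfN /= -gamma_herm.
Qed.

Lemma anti_row_diag0 (a : 'I_k) q : gamma (tidx a a) q = 0.
Proof. by apply/eqP; rewrite -eqNr eq_sym -anti_row tswap_tidx. Qed.

Variables (a b : 'I_k).

Lemma anti_swap_row :
  gamma (tidx b a) (tidx a b) = - gamma (tidx a b) (tidx a b).
Proof. by rewrite -anti_row tswap_tidx. Qed.

Lemma anti_swap_col :
  gamma (tidx a b) (tidx b a) = - gamma (tidx a b) (tidx a b).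
Proof. by rewrite -anti_col tswap_tidx. Qed.

Hypothesis gamma_ab_gt0 : 0 < gamma (tidx a b) (tidx a b).

Lemma ptrans_not_psd : ~ psd (ptrans gamma).
Proof.
move/(psd_qform2_ge0 (tidx a a) (tidx b b) 1 1).
rewrite conjC1 !mul1r !mxE !tidxK /= !anti_row_diag0 add0r addr0.
rewrite anti_swap_col anti_swap_row.
by rewrite -opprD oppr_ge0 => /le_gtF; rewrite addr_gt0.
Qed.

Lemma realign_ptrans_not_psd : ~ psd (realign (ptrans gamma)).
Proof.
move/(psd_diag_ge0 (tidx a b)).
rewrite !mxE !tidxK /= anti_swap_col oppr_ge0.
by move/le_gtF; rewrite gamma_ab_gt0.
Qed.

Lemma realign_neq : realign gamma != gamma.
Proof.
apply: contraTneq gamma_ab_gt0 => /matrixP/(_ (tidx a b) (tidx a b)).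
by rewrite mxE !tidxK /= anti_row_diag0 => <-; rewrite ltxx.
Qed.

End AntisymmetricState.

Arguments ptrans_not_psd {C k gamma} gamma_psd gamma_anti {a b}.
Arguments realign_ptrans_not_psd {C k gamma} gamma_psd gamma_anti {a b}.
Arguments realign_neq {C k gamma} gamma_anti {a b}.

Theorem mainTheorem17 (C : numClosedFieldType) (k : nat)
  (gamma : 'M[C]_(k * k)) :
  psd gamma -> gamma != 0 ->
  (forall x : 'cV[C]_(k * k),
      swap_mx C k *m (gamma *m x) = - (gamma *m x)) ->
  ~ psd (ptrans gamma) /\ ~ psd (realign (ptrans gamma)) /\
  realign gamma != gamma.
Proof.
move=> gamma_psd gamma_neq0 gamma_anti.
have [p gamma_pp_gt0] := psd_neq0_diag_gt0 gamma_psd gamma_neq0.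
rewrite -(tidx_unindexK p) in gamma_pp_gt0.
split; [|split].
- exact: (ptrans_not_psd gamma_psd gamma_anti gamma_pp_gt0).
- exact: (realign_ptrans_not_psd gamma_psd gamma_anti gamma_pp_gt0).
- exact: (realign_neq gamma_anti gamma_pp_gt0).
Qed.
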